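(* Let $R$ be a commutative $\mathbb{C}$-algebra, let $f,g\colon\mathrm{Mac}^2\to R$ be $\mathbb{C}$-linear maps, and let $(G,\mathrm{wt})=(V,E,\mathrm{wt})$ be a weighted graph. Then $$(f*g)(\tilde{\mathbf{X}}_G)=\sum_{A\subseteq V}f(\tilde{\mathbf{X}}_{G|_A})\cdot g(\tilde{\mathbf{X}}_{G|_{\bar A}}),$$ where $\bar A=V\setminus A$.
   Context: All graphs are finite, simple and undirected. A weighted graph is a graph $(V,E)$ with $\mathrm{wt}\colon V\to\mathbb{P}$ ($\mathbb{P}$ the positive integers). For $A\subseteq V$, $G|_A$ is the induced subgraph on $A$ with restricted weights. Proper colorings are maps $\kappa\colon V\to\mathbb{P}$ with $\kappa(u)\ne\kappa(v)$ for every edge $uv$, forming $\mathrm{Col}(G)$. The chromatic MacMahon symmetric function is $\tilde{\mathbf{X}}_G=\sum_{\kappa\in\mathrm{Col}(G)}\prod_{v\in V}x_{\kappa(v)}y_{\kappa(v)}^{\mathrm{wt}(v)}$ (equal to $1$ for the empty graph) in commuting indeterminates $x_1,x_2,\dots,y_1,y_2,\dots$; it lies in $\mathrm{Mac}^2$, the algebra of power series invariant under simultaneously permuting indices of both alphabets. $\mathrm{Mac}^2$ has basis $p_{\boldsymbol{\Lambda}}=\prod_{i}p_{\boldsymbol{\lambda}^{(i)}}$ over unordered lists $\boldsymbol{\Lambda}=(\boldsymbol{\lambda}^{(1)},\dots,\boldsymbol{\lambda}^{(\ell)})$ of vectors in $\mathbb{N}^2\setminus\{(0,0)\}$, where $p_{(a,b)}=\sum_j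 x_j^ay_j^b$ and $p_\emptyset=1$. Its coproduct is the linear map $\Delta(p_{\boldsymbol{\Lambda}})=\sum_{J\subseteq[\ell]}p_{\boldsymbol{\Lambda}|_J}\otimes p_{\boldsymbol{\Lambda}|_{\bar J}}$, with $\boldsymbol{\Lambda}|_J$ having parts $\boldsymbol{\lambda}^{(i)}$, $i\in J$, and $\bar J=[\ell]\setminus J$. The convolution of $f,g$ is $(f*g)(B)=\sum f(B_1)g(B_2)$ where $\Delta(B)=\sum B_1\otimes B_2$. *)

From HB Require Import structures.
From mathcomp Require Import all_boot all_order all_algebra.
From mathcomp Require Import finmap.
From mathcomp Require Import complex.
From mathcomp Require Import reals.

Set Implicit Arguments.
Unset Strict Implicit.
Unset Printing Implicit Defensive.

Import Order.TTheory GRing.Theory Num.Theory.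
Local Open Scope ring_scope.

(* A monomial prod_j x_j^(a_j) y_j^(b_j) is the finitely supported map    *)
(* j |-> (a_j, b_j).  (Index 0 is unused: indices live in P = {1,2,...}; *)
(* a monomial involving index 0 simply gets coefficient 0 below.)        *)
Definition mon := {fsfun nat -> (nat * nat)%type with (0%N, 0%N)}.

Definition mbound (m : mon) : nat := (\max_(j <- finsupp m) j.+1)%N.

Definition vsum (I : finType) (P : pred I) (lam : I -> nat * nat) : nat * nat :=
  ((\sum_(i | P i) (lam i).1)%N, (\sum_(i | P i) (lam i).2)%N).

(* Number of index assignments phi : I -> P (all values of phi below the
   bound of m, which is automatic when every lam i is nonzero) satisfying
   ok, such that prod_i x_(phi i)^(lam i).1 y_(phi i)^(lam i).2 = m. *)
Definition assign_count (I : finType) (lam : I -> nat * nat)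
    (ok : forall N, {ffun I -> 'I_N} -> bool) (m : mon) : nat :=
  #|[set phi : {ffun I -> 'I_(mbound m)} |
      [&& ok _ phi, [forall i, (0 < phi i)%N] &
          [forall j : 'I_(mbound m), m (val j) == vsum (fun i => phi i == j) lam]]]|.

Definition ps (C : nzRingType) := mon -> C.

Definition proper_col (V : finType) (e : rel V) N (k : {ffun V -> 'I_N}) : bool :=
  [forall u, forall v, e u v ==> (k u != k v)].

(* Chromatic MacMahon symmetric function:
   sum over proper colorings kappa : V -> P of prod_v x_(kappa v) y_(kappa v)^(wt v);
   its coefficient at m is the number of proper colorings with that monomial. *)
Definition chromMac (C : nzRingType) (V : finType) (e : rel V) (wt : V -> nat) : ps C :=
  fun m => (assign_count (fun v => (1%N, wt v)) (fun N k => proper_col e k) m)%:R.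

Definition chromMac_ind (C : nzRingType) (V : finType) (e : rel V) (wt : V -> nat)
    (A : {set V}) : ps C :=
  @chromMac C {v : V | v \in A} (fun u w => e (val u) (val w)) (fun u => wt (val u)).

(* Power sum basis of Mac^2: p_(a,b) = sum_j x_j^a y_j^b, p_Lambda = prod_i p_(lambda^(i)).
   Expanding the product, the coefficient of m in p_Lambda is the number of
   maps phi : [l] -> P with prod_i x_(phi i)^(a_i) y_(phi i)^(b_i) = m. *)
Definition psum (C : nzRingType) (L : seq (nat * nat)) : ps C :=
  fun m => (assign_count (fun i : 'I_(size L) => nth (0%N, 0%N) L i)
                         (fun N _ => true) m)%:R.

Definition vlist (L : seq (nat * nat)) : bool := all (fun v => v != (0%N, 0%N)) L.

Definition pexpansion (C : nzRingType) (c : seq (C * seq (nat * nat))) (B : ps C) : Prop :=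
  all (fun x => vlist x.2) c /\
  B = (fun m => \sum_(x <- c) x.1 * psum C x.2 m).

Definition inMac2 (C : nzRingType) (B : ps C) : Prop := exists c, pexpansion c B.

(* C-linear maps Mac^2 -> R (given by any function on power series whose
   restriction to Mac^2 is C-linear; only that restriction ever matters). *)
Definition Mac2_linear (C : comNzRingType) (R : lalgType C) (f : ps C -> R) : Prop :=
  forall (a : C) (B1 B2 : ps C), inMac2 B1 -> inMac2 B2 ->
    f (fun m => a * B1 m + B2 m) = a *: f B1 + f B2.

Definition lrestr (L : seq (nat * nat)) (J : {set 'I_(size L)}) : seq (nat * nat) :=
  [seq nth (0%N, 0%N) L (val i) | i <- enum J].

(* Convolution (f*g)(B) computed from an expansion B = sum_k c_k p_(Lambda_k),
   using Delta(p_Lambda) = sum_J p_(Lambda|J) (x) p_(Lambda|Jbar) and linearity. *)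
Definition conv_exp (C : comNzRingType) (R : lalgType C) (f g : ps C -> R)
    (c : seq (C * seq (nat * nat))) : R :=
  \sum_(x <- c) x.1 *: \sum_(J : {set 'I_(size x.2)})
       f (psum C (lrestr J)) * g (psum C (lrestr (~: J))).

(* Coefficients of power sums and of X_G count index assignments: maps from the
   parts of Lambda (resp. the vertices, properly for X_G) to positive indices that
   produce a given monomial.  Let [mcat m m'] be [m] on the indices up to
   b = [mbound m] followed by [m'] shifted past b.  An assignment produces
   [mcat m m'] exactly when the set A of parts sent to indices below b produces [m]
   and its complement, shifted back, produces [m']; hence
     p_Lambda (mcat m m') = sum_J p_(Lambda|J) m * p_(Lambda|~J) m',
     X_G (mcat m m')      = sum_A X_(G|A) m * X_(G|~A) m',
   i.e. the coproduct is realised by splitting the alphabet.  So both sides of the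
   corollary are the images under f (x) g of tensors sum_i u_i (x) w_i with u_i, w_i
   in Mac^2 having the same coefficients at every pair (m, m'), and f (x) g only
   depends on these coefficients (Gaussian elimination on the w_i).  That X_G lies
   in Mac^2 is deletion-contraction: assignments proper along the edges are signed
   sums of assignments constant along edge sets, i.e. of power sums of contracted
   graphs. *)

From HB Require Import structures.
From mathcomp Require Import all_boot all_order all_algebra.
From mathcomp Require Import finmap.
From mathcomp Require Import complex.
From mathcomp Require Import reals.
From mathcomp Require Import zify ring.
From Stdlib Require Import FunctionalExtensionality Classical.

Set Implicit Arguments.
Unset Strict Implicit.
Unset Printing Implicit Defensive.

Import GRing.Theory.

Lemma val_finfunE (T : finType) N (F : T -> 'I_N) :
  (fun i => val (finfun F i)) = (fun i => val (F i)).
Proof. by apply: functional_extensionality => i; rewrite ffunE. Qed.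

Lemma in_assign_set (T : finType) N (Q : (T -> nat) -> bool) (k : T -> nat)
    (k_lt : forall i, k i < N) :
  ([ffun i => Ordinal (k_lt i)] \in [set phi : {ffun T -> 'I_N} | Q (fun i => val (phi i))])
  = Q k.
Proof. by rewrite inE val_finfunE. Qed.

Section Assignments.
Variables (I : finType) (mu : I -> nat * nat).

Definition assign_mon (k : I -> nat) (j : nat) : nat * nat :=
  vsum (fun i => k i == j) mu.

Definition mon_of_assign (k : I -> nat) : mon :=
  [fsfun j in [fset k i | i : I]%fset => assign_mon k j].

Definition valid_assign (m : mon) (k : I -> nat) : bool :=
  [forall i, 0 < k i] && (m == mon_of_assign k).

Definition card_assign N (Q : (I -> nat) -> bool) : nat :=
  #|[set phi : {ffun I -> 'I_N} | Q (fun i => val (phi i))]|.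

Definition num_assign (P : (I -> nat) -> bool) (m : mon) : nat :=
  card_assign (mbound m) (fun k => P k && valid_assign m k).

Lemma eq_vsum (P Q : pred I) : P =1 Q -> vsum P mu = vsum Q mu.
Proof. by move=> eqPQ; rewrite /vsum !(eq_bigl _ _ eqPQ). Qed.

Lemma vsum_pred0 (P : pred I) : P =1 xpred0 -> vsum P mu = (0, 0).
Proof. by move=> P0; rewrite /vsum !big_pred0. Qed.

Lemma vsum_neq0 (P : pred I) i : P i -> mu i != (0, 0) -> vsum P mu != (0, 0).
Proof.
move=> Pi; apply: contra; rewrite /vsum xpair_eqE !sum_nat_eq0.
case/andP => /forall_inP mu1_0 /forall_inP mu2_0.
by rewrite [mu i]surjective_pairing (eqP (mu1_0 i Pi)) (eqP (mu2_0 i Pi)).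
Qed.

Lemma mon_of_assignE k j : mon_of_assign k j = assign_mon k j.
Proof.
rewrite /mon_of_assign fsfun_fun; case: ifP => // /negbT j_notin.
rewrite /assign_mon vsum_pred0 // => i; apply/negbTE; apply: contra j_notin.
by move=> /eqP <-; apply/imfsetP; exists i.
Qed.

Lemma valid_assignP (m : mon) k :
  reflect ((forall i, 0 < k i) /\ forall j, m j = assign_mon k j)
          (valid_assign m k).
Proof.
apply: (iffP andP) => [[/forallP k_pos /eqP ->]|[k_pos m_k]]; split => //.
- by move=> j; rewrite mon_of_assignE.
- exact/forallP.
- by apply/eqP/fsfunP => j; rewrite mon_of_assignE.
Qed.

Lemma eq_card_assign N (Q Q' : (I -> nat) -> bool) :
  Q =1 Q' -> card_assign N Q = card_assign N Q'.
Proof. by move=> /functional_extensionality ->. Qed.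

Lemma eq_num_assign (P P' : (I -> nat) -> bool) (m : mon) :
  P =1 P' -> num_assign P m = num_assign P' m.
Proof. by move=> /functional_extensionality ->. Qed.

Lemma card_assignID N (Q Q' : (I -> nat) -> bool) :
  card_assign N Q =
  card_assign N (fun k => Q k && Q' k) + card_assign N (fun k => Q k && ~~ Q' k).
Proof.
rewrite /card_assign -(cardsID [set phi : {ffun I -> 'I_N} | Q' (fun i => val (phi i))]).
by congr (_ + _); apply: eq_card => phi; rewrite !inE andbC.
Qed.

Lemma num_assignID (P P' : (I -> nat) -> bool) (m : mon) :
  num_assign P m =
  num_assign (fun k => P k && P' k) m + num_assign (fun k => P k && ~~ P' k) m.
Proof.
rewrite /num_assign (card_assignID _ _ P'); congr (_ + _); apply: eq_card_assign => k;
by case: (P k); case: (P' k); case: (valid_assign m k).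
Qed.

Lemma card_assign_widen N1 N2 (Q : (I -> nat) -> bool) :
  N1 <= N2 -> (forall k, Q k -> forall i, k i < N1) ->
  card_assign N1 Q = card_assign N2 Q.
Proof.
move=> leN bounded; rewrite /card_assign.
pose widen (phi : {ffun I -> 'I_N1}) := [ffun i => widen_ord leN (phi i)].
have widen_inj : injective widen.
  move=> phi psi /ffunP eq_phi; apply/ffunP => i; apply/val_inj.
  by have := eq_phi i; rewrite !ffunE => /(congr1 val).
rewrite -(card_imset _ widen_inj); apply: eq_card => psi; apply/imsetP/idP.
- by case=> phi; rewrite inE => Qphi ->; rewrite inE /widen val_finfunE.
- rewrite inE => Qpsi; exists [ffun i => Ordinal (bounded _ Qpsi i)].
    by rewrite in_assign_set.
  by apply/ffunP => i; apply/val_inj; rewrite !ffunE.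
Qed.

Lemma ltn_mbound (m : mon) j : j \in finsupp m -> j < mbound m.
Proof. by move=> j_in; exact: (@leq_bigmax_seq _ _ xpredT (fun j => j.+1) j j_in). Qed.

Lemma mbound_leq (m : mon) N : {in finsupp m, forall j, j < N} -> mbound m <= N.
Proof. by move=> ltN; apply/bigmax_leqP_seq => j j_in _; exact: ltN. Qed.

Lemma mon_ge_mbound (m : mon) j : mbound m <= j -> m j = (0, 0).
Proof. by move=> ge_j; apply: fsfun_dflt; apply: contraL ge_j => /ltn_mbound; rewrite -ltnNge. Qed.

Lemma assign_count_num (ok : forall N, {ffun I -> 'I_N} -> bool) P (m : mon) :
  (forall N phi, ok N phi = P (fun i => val (phi i))) ->
  assign_count mu ok m = num_assign P m.
Proof.
move=> okP; apply: eq_card => phi; rewrite !inE okP; congr (_ && (_ && _)).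
apply/forallP/eqP => [m_phi | m_phi j]; last first.
  have -> : m (val j) = mon_of_assign (fun i => val (phi i)) (val j) by rewrite -m_phi.
  by rewrite mon_of_assignE; apply/eqP/eq_vsum => i; rewrite -val_eqE.
apply/fsfunP => j; rewrite mon_of_assignE; case: (ltnP j (mbound m)) => [lt_j | ge_j].
  by rewrite (eqP (m_phi (Ordinal lt_j))); apply: eq_vsum => i; rewrite -val_eqE.
rewrite mon_ge_mbound // /assign_mon vsum_pred0 // => i /=.
by rewrite ltn_eqF // (leq_trans (ltn_ord _) ge_j).
Qed.

Lemma valid_assign_ltn_mbound (m : mon) k :
  (forall i, mu i != (0, 0)) -> valid_assign m k -> forall i, k i < mbound m.
Proof.
move=> mu_neq0 /valid_assignP[_ m_k] i; apply: ltn_mbound.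
by rewrite mem_finsupp m_k; apply: (vsum_neq0 _ (mu_neq0 i)); rewrite /= eqxx.
Qed.

Lemma num_assign_widen P (m : mon) N :
  (forall i, mu i != (0, 0)) -> mbound m <= N ->
  num_assign P m = card_assign N (fun k => P k && valid_assign m k).
Proof.
move=> mu_neq0 leN; apply: card_assign_widen => // k /andP[_].
exact: valid_assign_ltn_mbound.
Qed.

Lemma num_assign_eq0 P (m : mon) : m 0 != (0, 0) -> num_assign P m = 0.
Proof.
move=> m0; apply: eq_card0 => phi; rewrite !inE; apply/negbTE.
apply: contra m0 => /andP[_ /valid_assignP[k_pos ->]].
by rewrite /assign_mon vsum_pred0 // => i /=; rewrite eqn0Ngt k_pos.
Qed.

End Assignments.

Lemma card_assign_reindex (T T' : finType) (s : T' -> T) N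
    (Q : (T -> nat) -> bool) (Q' : (T' -> nat) -> bool) :
  bijective s -> (forall k, Q' (fun t => k (s t)) = Q k) ->
  card_assign N Q' = card_assign N Q.
Proof.
case=> s' sK s'K Q'Q; rewrite /card_assign.
pose comp (phi : {ffun T -> 'I_N}) := [ffun t => phi (s t)].
have comp_inj : injective comp.
  move=> phi psi /ffunP eq_phi; apply/ffunP => t.
  by have := eq_phi (s' t); rewrite !ffunE s'K.
rewrite -(card_imset _ comp_inj); apply: eq_card => psi; apply/idP/imsetP.
- rewrite inE => Q'psi; exists [ffun t => psi (s' t)].
    rewrite inE val_finfunE -Q'Q /=.
    suff -> : (fun t => val (psi (s' (s t)))) = (fun t => val (psi t)) by [].
    by apply: functional_extensionality => t; rewrite sK.
  by apply/ffunP => t; rewrite !ffunE sK.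
- case=> phi; rewrite inE => Qphi ->; rewrite inE /comp val_finfunE.
  by rewrite (Q'Q (fun i => val (phi i))).
Qed.

Lemma valid_assign_reindex (T T' : finType) (s : T' -> T) (mu : T -> nat * nat)
    (m : mon) (k : T -> nat) :
  bijective s ->
  valid_assign (fun t => mu (s t)) m (fun t => k (s t)) = valid_assign mu m k.
Proof.
move=> s_bij; have [s' sK s'K] := s_bij.
have mon_s j : assign_mon (fun t => mu (s t)) (fun t => k (s t)) j = assign_mon mu k j.
  by rewrite /assign_mon /vsum !(reindex s (onW_bij _ s_bij)).
apply/valid_assignP/valid_assignP => -[k_pos m_k].
  by split=> [t | j]; [rewrite -(s'K t) | rewrite m_k mon_s].
by split=> [t | j]; [exact: k_pos | rewrite m_k mon_s].
Qed.

Lemma num_assign_reindex (T T' : finType) (s : T' -> T) (mu : T -> nat * nat)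
    (P : (T -> nat) -> bool) (P' : (T' -> nat) -> bool) (m : mon) :
  bijective s -> (forall k, P' (fun t => k (s t)) = P k) ->
  num_assign (fun t => mu (s t)) P' m = num_assign mu P m.
Proof.
move=> s_bij P'P; apply: (card_assign_reindex _ s_bij) => k /=.
by rewrite P'P valid_assign_reindex.
Qed.

(* The exponent of [m'] at the unused index 0 is dropped. *)
Definition mcat (m m' : mon) : mon :=
  [fsfun j in (finsupp m `|` [fset (mbound m + j)%N | j in finsupp m'])%fset =>
     if j <= mbound m then m j else m' (j - mbound m)].

Lemma mcatE (m m' : mon) j :
  mcat m m' j = if j <= mbound m then m j else m' (j - mbound m).
Proof.
rewrite /mcat fsfun_fun; case: ifP => // /negbT j_out; case: ifP => le_j.
  by symmetry; apply: fsfun_dflt; apply: contra j_out; rewrite in_fsetU => ->.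
symmetry; apply: fsfun_dflt; apply: contra j_out => j_in.
rewrite in_fsetU; apply/orP; right; apply/imfsetP; exists (j - mbound m) => //.
by move/negbT: le_j; rewrite -ltnNge => lt_j; lia.
Qed.

Lemma mbound_mcat (m m' : mon) : mbound (mcat m m') <= mbound m + mbound m'.
Proof.
apply: mbound_leq => j; rewrite mem_finsupp mcatE; case: ifP => le_j j_in.
  by rewrite ltn_addr // ltn_mbound // mem_finsupp.
have := @ltn_mbound m' (j - mbound m); rewrite mem_finsupp => /(_ j_in).
by move/negbT: le_j; rewrite -ltnNge => lt_j; lia.
Qed.

Definition restr (I : finType) (T : Type) (A : {set I}) (F : I -> T) : {x | x \in A} -> T :=
  fun x => F (val x).
Arguments restr {I T} A F _ /.

Lemma vsum_restr (I : finType) (mu : I -> nat * nat) (A : {set I}) (P : pred I) :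
  {subset P <= A} -> vsum P mu = vsum (fun x => P (val x)) (restr A mu).
Proof.
move=> PA; have sum_in (F : I -> nat) : \sum_(i | P i) F i = \sum_(i in A | P i) F i.
  by apply: eq_bigl => i; case: (boolP (P i)) => [/PA -> | _]; rewrite ?andbF.
by rewrite /vsum !sum_in !big_sub_cond.
Qed.

Section SplitAssignment.
Variables (I : finType) (mu : I -> nat * nat) (A : {set I}) (B : nat) (k : I -> nat).
Hypothesis k_low : forall i, i \in A -> k i < B.
Hypothesis k_high : forall i, i \notin A -> B < k i.

Local Notation k1 := (restr A k).
Local Notation k2 := (restr (~: A) (fun i => k i - B)).

Lemma assign_mon_low j : j < B -> assign_mon mu k j = assign_mon (restr A mu) k1 j.
Proof.
move=> lt_j; rewrite /assign_mon (vsum_restr _ (A := A)) // => i /eqP ki.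
by apply: contraLR lt_j => /k_high; lia.
Qed.

Lemma assign_mon_mid : assign_mon mu k B = (0, 0).
Proof.
rewrite /assign_mon vsum_pred0 // => i /=; apply/negbTE.
by case: (boolP (i \in A)) => [/k_low | /k_high]; lia.
Qed.

Lemma assign_mon_high t :
  0 < t -> assign_mon mu k (B + t) = assign_mon (restr (~: A) mu) k2 t.
Proof.
move=> t_gt0; rewrite /assign_mon (vsum_restr _ (A := ~: A)).
  apply: eq_vsum => -[i iA'] /=; have /k_high ki : i \notin A by rewrite -in_setC.
  by apply/eqP/eqP; lia.
by move=> i /eqP ki; rewrite inE; apply: contraL t_gt0 => /k_low; lia.
Qed.

Lemma assign_mon_restr_high j : B <= j -> assign_mon (restr A mu) k1 j = (0, 0).
Proof.
move=> le_j; rewrite /assign_mon vsum_pred0 // => -[i iA] /=; apply/negbTE.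
by have := k_low iA; lia.
Qed.

Lemma assign_mon_restr0 : assign_mon (restr (~: A) mu) k2 0 = (0, 0).
Proof.
rewrite /assign_mon vsum_pred0 // => -[i iA'] /=; apply/negbTE.
have /k_high : i \notin A by rewrite -in_setC.
lia.
Qed.

Lemma valid_assign_mcat (m m' : mon) :
  B = mbound m -> m' 0 = (0, 0) ->
  valid_assign mu (mcat m m') k =
  valid_assign (restr A mu) m k1 && valid_assign (restr (~: A) mu) m' k2.
Proof.
move=> defB m'0; apply/valid_assignP/andP.
- case=> k_pos mcat_k; split; apply/valid_assignP; split.
  + by move=> x; apply: k_pos.
  + move=> j; case: (ltnP j B) => [lt_j | le_j].
      by rewrite -assign_mon_low // -mcat_k mcatE -defB ltnW.
    by rewrite assign_mon_restr_high // mon_ge_mbound -?defB.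
  + move=> -[i iA'] /=; have /k_high : i \notin A by rewrite -in_setC.
    lia.
  + case=> [|t]; first by rewrite m'0 assign_mon_restr0.
    rewrite -assign_mon_high // -mcat_k mcatE -defB ifF; last by lia.
    by congr (m' _); lia.
- case=> /valid_assignP[k1_pos m_k1] /valid_assignP[k2_pos m'_k2]; split.
    move=> i; case: (boolP (i \in A)) => [iA | /k_high]; last by lia.
    exact: (k1_pos (exist _ i iA)).
  move=> j; rewrite mcatE -defB; case: ifP => le_j.
    case: (ltnP j B) => [lt_j | ge_j]; first by rewrite assign_mon_low.
    have -> : j = B by lia.
    by rewrite assign_mon_mid mon_ge_mbound ?defB.
  have -> : j = B + (j - B) by lia.
  by rewrite assign_mon_high ?addKn -?m'_k2 //; lia.
Qed.

End SplitAssignment.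

Lemma valid_assign_mcat_gap (I : finType) (mu : I -> nat * nat) (m m' : mon) k :
  (forall i, mu i != (0, 0)) -> valid_assign mu (mcat m m') k -> forall i, k i != mbound m.
Proof.
move=> mu_neq0 /valid_assignP[_ mcat_k] i; apply/eqP => ki.
have : assign_mon mu k (k i) != (0, 0) by apply: (vsum_neq0 _ (mu_neq0 i)); rewrite /= eqxx.
by rewrite -mcat_k mcatE ki leqnn mon_ge_mbound ?eqxx.
Qed.

Section Glue.
Variables (I : finType) (A : {set I}) (B : nat).

Definition glue (k1 : {x | x \in A} -> nat) (k2 : {x | x \in ~: A} -> nat) (i : I) : nat :=
  if insub i is Some x then k1 x else if insub i is Some y then B + k2 y else 0.

Variables (k1 : {x | x \in A} -> nat) (k2 : {x | x \in ~: A} -> nat).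

Lemma glue_in i (iA : i \in A) : glue k1 k2 i = k1 (exist _ i iA).
Proof. by rewrite /glue insubT. Qed.

Lemma glue_notin i (iA' : i \in ~: A) : glue k1 k2 i = B + k2 (exist _ i iA').
Proof. by rewrite /glue insubN ?insubT // -in_setC. Qed.

Lemma restr_glue_in : restr A (glue k1 k2) = k1.
Proof. by apply: functional_extensionality => -[i iA] /=; rewrite glue_in. Qed.

Lemma restr_glue_notin : restr (~: A) (fun i => glue k1 k2 i - B) = k2.
Proof. by apply: functional_extensionality => -[i iA'] /=; rewrite glue_notin addKn. Qed.

Lemma glue_low : (forall x, k1 x < B) -> (forall y, 0 < k2 y) ->
  [set i | glue k1 k2 i < B] = A.
Proof.
move=> k1_low k2_pos; apply/setP => i; rewrite inE.
case: (boolP (i \in A)) => [iA | iA]; first by rewrite glue_in k1_low.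
have iA' : i \in ~: A by rewrite in_setC.
by rewrite glue_notin; have := k2_pos (exist _ i iA'); lia.
Qed.

End Glue.

Lemma card_assign_glue (I : finType) (A : {set I}) N B
    (Q1 : ({x | x \in A} -> nat) -> bool) (Q2 : ({x | x \in ~: A} -> nat) -> bool) :
  (forall k1, Q1 k1 -> forall x, k1 x < B) ->
  (forall k2, Q2 k2 -> forall y, 0 < k2 y < N - B) ->
  card_assign N (fun k => [&& [set i | k i < B] == A, Q1 (restr A k) &
                              Q2 (restr (~: A) (fun i => k i - B))]) =
  card_assign N Q1 * card_assign N Q2.
Proof.
move=> Q1_low Q2_high.
pose Q k := [&& [set i | k i < B] == A, Q1 (restr A k) & Q2 (restr (~: A) (fun i => k i - B))].
change (card_assign N Q = card_assign N Q1 * card_assign N Q2).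
rewrite /card_assign -cardsX.
set S := [set phi : {ffun I -> 'I_N} | _].
pose cut (phi : {ffun I -> 'I_N}) :=
  ([ffun x : {x | x \in A} => phi (val x)],
   [ffun y : {x | x \in ~: A} => Ordinal (leq_ltn_trans (leq_subr B _) (ltn_ord (phi (val y))))]).
have S_high phi : phi \in S -> forall i, i \notin A -> B < phi i.
  rewrite inE => /and3P[/eqP low_A _ /Q2_high Q2phi] i iA.
  have iA' : i \in ~: A by rewrite in_setC.
  by have /andP[+ _] := Q2phi (exist _ i iA'); rewrite /=; lia.
have cut_inj : {in S &, injective cut}.
  move=> phi psi phiS psiS [/ffunP eq1 /ffunP eq2]; apply/ffunP => i; apply/val_inj.
  case: (boolP (i \in A)) => [iA | iA].
    by have := eq1 (exist _ i iA); rewrite !ffunE => ->.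
  have iA' : i \in ~: A by rewrite in_setC.
  have /ltnW le_phi := S_high _ phiS _ iA; have /ltnW le_psi := S_high _ psiS _ iA.
  have := eq2 (exist _ i iA'); rewrite !ffunE => /(congr1 val) /= /(congr1 (addn^~ B)).
  by rewrite /= !subnK.
rewrite -(card_in_imset cut_inj); apply: eq_card => -[p1 p2]; apply/imsetP/idP.
  case=> phi; rewrite inE => /and3P[_ Q1phi Q2phi] [-> ->].
  by rewrite in_setX !inE !val_finfunE Q1phi Q2phi.
rewrite in_setX !inE => /andP[Q1p Q2p].
set k := glue B (fun x => val (p1 x)) (fun y => val (p2 y)).
have k_lt i : k i < N.
  case: (boolP (i \in A)) => [iA | iA]; rewrite /k.
    by rewrite glue_in ltn_ord.
  have iA' : i \in ~: A by rewrite in_setC.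
  rewrite glue_notin; have := Q2_high _ Q2p (exist _ i iA'); set n := val (p2 _); lia.
exists [ffun i => Ordinal (k_lt i)].
  rewrite /S in_assign_set /Q /k restr_glue_in restr_glue_notin Q1p Q2p glue_low ?eqxx //.
  - exact: Q1_low.
  - by move=> y; have /andP[] := Q2_high _ Q2p y.
rewrite /cut; congr (_, _); apply/ffunP => -[i iA]; apply/val_inj; rewrite !ffunE /=.
  by rewrite /k glue_in.
by rewrite /k glue_notin addKn.
Qed.

Lemma card_assign_partition (I J : finType) N (Q : (I -> nat) -> bool) (f : (I -> nat) -> J) :
  card_assign N Q = \sum_(j : J) card_assign N (fun k => Q k && (f k == j)).
Proof.
rewrite /card_assign -sum1_card.
rewrite (partition_big (fun phi : {ffun I -> 'I_N} => f (fun i => val (phi i))) xpredT) //=.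
by apply: eq_bigr => j _; rewrite -sum1_card; apply: eq_bigl => phi; rewrite !inE.
Qed.

Section MonomialConcatenation.
Variables (I : finType) (mu : I -> nat * nat).
Hypothesis mu_neq0 : forall i, mu i != (0, 0).
Variables (m m' : mon).
Hypothesis m'0 : m' 0 = (0, 0).
Variables (P : (I -> nat) -> bool) (PA : forall A : {set I}, ({x | x \in A} -> nat) -> bool).
Arguments PA : clear implicits.
Hypothesis P_split : forall (A : {set I}) k,
  (forall i, i \in A -> k i < mbound m) -> (forall i, i \notin A -> mbound m < k i) ->
  P k = PA A (restr A k) && PA (~: A) (restr (~: A) (fun i => k i - mbound m)).

Local Notation N := (mbound m + mbound m').+1.

Lemma card_assign_mcat_low (A : {set I}) :
  card_assign N (fun k => (P k && valid_assign mu (mcat m m') k) &&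
                          ([set i | k i < mbound m] == A)) =
  num_assign (restr A mu) (PA A) m * num_assign (restr (~: A) mu) (PA (~: A)) m'.
Proof.
have restr_neq0 (S : {set I}) x : restr S mu x != (0, 0) by exact: mu_neq0.
rewrite !(num_assign_widen (N := N) _ (restr_neq0 _)); try lia.
rewrite -(card_assign_glue (B := mbound m)); last first.
- move=> k2 /andP[_ valid_k2] y; have /valid_assignP[k2_pos _] := valid_k2.
  have := valid_assign_ltn_mbound (restr_neq0 _) valid_k2 y.
  by rewrite k2_pos /=; lia.
- by move=> k1 /andP[_ /(valid_assign_ltn_mbound (restr_neq0 _))].
apply: eq_card_assign => k /=.
case: (eqVneq [set i | k i < mbound m] A) => [low_A | _]; last by rewrite andbF.
have k_low i : i \in A -> k i < mbound m by rewrite -low_A inE.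
rewrite andbT /=.
case: (pickP (fun i => k i == mbound m)) => [i /eqP ki | no_gap].
  have iA' : i \in ~: A by rewrite in_setC -low_A inE ki ltnn.
  have /negbTE -> : ~~ valid_assign mu (mcat m m') k.
    by apply/negP => /(valid_assign_mcat_gap mu_neq0)/(_ i); rewrite ki eqxx.
  suff /negbTE -> : ~~ valid_assign (restr (~: A) mu) m'
                        (restr (~: A) (fun i => k i - mbound m)) by rewrite !andbF.
  by apply/negP => /valid_assignP[pos _]; have := pos (exist _ i iA'); rewrite /= ki subnn.
have k_high i : i \notin A -> mbound m < k i.
  by rewrite -low_A inE -leqNgt leq_eqVlt eq_sym no_gap.
by rewrite (P_split k_low k_high) (valid_assign_mcat mu k_low k_high) // andbACA.
Qed.

Lemma num_assign_mcat :
  num_assign mu P (mcat m m') =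
  \sum_(A : {set I}) num_assign (restr A mu) (PA A) m * num_assign (restr (~: A) mu) (PA (~: A)) m'.
Proof.
rewrite (num_assign_widen (N := N) _ mu_neq0); last by have := mbound_mcat m m'; lia.
rewrite (card_assign_partition _ _ (fun k => [set i | k i < mbound m])).
by apply: eq_bigr => A _; exact: card_assign_mcat_low.
Qed.

End MonomialConcatenation.

Local Open Scope ring_scope.

Lemma psum_num (C : nzRingType) (L : seq (nat * nat)) (m : mon) :
  psum C L m = (num_assign (fun i : 'I_(size L) => nth (0, 0)%N L i) xpredT m)%:R.
Proof. by rewrite /psum (@assign_count_num _ _ _ xpredT). Qed.

Lemma psum_eq0 (C : nzRingType) L (m : mon) : m 0%N != (0, 0)%N -> psum C L m = 0.
Proof. by move=> m0; rewrite psum_num num_assign_eq0. Qed.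

Lemma psum_map_enum (C : nzRingType) (T : finType) (A : {set T}) (mu : T -> nat * nat)
    (m : mon) :
  psum C (map mu (enum A)) m = (num_assign (restr A mu) xpredT m)%:R.
Proof.
rewrite psum_num; congr _%:R.
have size_A : size (map mu (enum A)) = #|A| by rewrite size_map cardE.
pose s (i : 'I_(size (map mu (enum A)))) : {x | x \in A} :=
  exist _ (enum_val (cast_ord size_A i)) (enum_valP _).
have s_bij : bijective s.
  apply: inj_card_bij => [i j /(congr1 val) /enum_val_inj /cast_ord_inj // |].
  by rewrite card_sig card_ord size_A.
suff -> : (fun i : 'I_(size (map mu (enum A))) => nth (0, 0)%N (map mu (enum A)) i) =
          (fun i => restr A mu (s i)).
  exact: num_assign_reindex.
apply: functional_extensionality => i /=.
have lt_i : (i < size (enum A))%N by rewrite -(size_map mu) ltn_ord.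
rewrite (nth_map (enum_val (cast_ord size_A i))) //.
by rewrite [in RHS](enum_val_nth (enum_val (cast_ord size_A i))).
Qed.

Lemma vlist_nth_neq0 (L : seq (nat * nat)) :
  vlist L -> forall i : 'I_(size L), nth (0, 0)%N L i != (0, 0)%N.
Proof. by move=> /(all_nthP (0, 0)%N) L_neq0 i; apply: L_neq0. Qed.

Lemma psum_mcat (C : nzRingType) (L : seq (nat * nat)) (m m' : mon) :
  vlist L -> m' 0%N = (0, 0)%N ->
  psum C L (mcat m m') =
  \sum_(J : {set 'I_(size L)}) psum C (lrestr J) m * psum C (lrestr (~: J)) m'.
Proof.
move=> vL m'0; rewrite psum_num.
rewrite (num_assign_mcat (vlist_nth_neq0 vL) m'0 (PA := fun _ _ => true)) //.
by rewrite natr_sum; apply: eq_bigr => J _; rewrite natrM /lrestr !psum_map_enum.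
Qed.

Definition proper_assign (V : finType) (e : rel V) (k : V -> nat) : bool :=
  [forall u, forall v, e u v ==> (k u != k v)].

Lemma chromMac_num (C : nzRingType) (V : finType) (e : rel V) (wt : V -> nat) (m : mon) :
  chromMac C e wt m = (num_assign (fun v => (1, wt v))%N (proper_assign e) m)%:R.
Proof. by rewrite /chromMac (@assign_count_num _ _ _ (proper_assign e)). Qed.

Lemma proper_assign_split (V : finType) (e : rel V) (A : {set V}) (B : nat) (k : V -> nat) :
  (forall v, v \in A -> (k v < B)%N) -> (forall v, v \notin A -> (B < k v)%N) ->
  proper_assign e k =
  proper_assign (fun u w : {v | v \in A} => e (val u) (val w)) (restr A k) &&
  proper_assign (fun u w : {v | v \in ~: A} => e (val u) (val w))
                (restr (~: A) (fun v => k v - B)%N).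
Proof.
move=> k_low k_high.
have out_high u : u \in ~: A -> (B < k u)%N by rewrite in_setC; exact: k_high.
have k_cross u v : (u \in A) != (v \in A) -> k u != k v.
  by case: (boolP (u \in A)) => [/k_low | /k_high];
     case: (boolP (v \in A)) => [/k_low | /k_high] //; lia.
apply/forallP/andP => [proper | [proper_in proper_out] u].
  split; apply/forallP => -[u uS]; apply/forallP => -[v vS]; apply/implyP => /= euv;
    have := implyP (forallP (proper u) v) euv => //.
  by have := out_high u uS; have := out_high v vS; lia.
apply/forallP => v; apply/implyP => euv.
case: (eqVneq (u \in A) (v \in A)) => [same | /k_cross //].
case: (boolP (u \in A)) => uA; have vA := uA; rewrite same in vA.
  exact: (implyP (forallP (forallP proper_in (exist _ u uA)) (exist _ v vA)) euv).
rewrite -in_setC in uA; rewrite -in_setC in vA.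
have := implyP (forallP (forallP proper_out (exist _ u uA)) (exist _ v vA)) euv => /=.
by have := out_high u uA; have := out_high v vA; lia.
Qed.

Lemma chromMac_mcat (C : nzRingType) (V : finType) (e : rel V) (wt : V -> nat) (m m' : mon) :
  m' 0%N = (0, 0)%N ->
  chromMac C e wt (mcat m m') =
  \sum_(A : {set V}) chromMac_ind C e wt A m * chromMac_ind C e wt (~: A) m'.
Proof.
move=> m'0; rewrite chromMac_num.
rewrite (num_assign_mcat _ m'0
  (PA := fun A => proper_assign (fun u w : {v | v \in A} => e (val u) (val w)))) //.
  by rewrite natr_sum; apply: eq_bigr => A _; rewrite natrM /chromMac_ind !chromMac_num.
by move=> A k; exact: proper_assign_split.
Qed.

Section Mac2Closure.
Variable C : nzRingType.

Lemma inMac2_zero : inMac2 (fun _ : mon => 0 : C).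
Proof. by exists [::]; split => //; apply: functional_extensionality => m; rewrite big_nil. Qed.

Lemma inMac2_scale_add (a : C) (B1 B2 : ps C) :
  inMac2 B1 -> inMac2 B2 -> inMac2 (fun m => a * B1 m + B2 m).
Proof.
case=> c1 [vc1 ->] [c2 [vc2 ->]].
exists ([seq (a * x.1, x.2) | x <- c1] ++ c2); split; first by rewrite all_cat all_map vc1 vc2.
apply: functional_extensionality => m; rewrite big_cat big_map /= mulr_sumr.
by congr (_ + _); apply: eq_bigr => x _; rewrite mulrA.
Qed.

Lemma inMac2_scale (a : C) (B : ps C) : inMac2 B -> inMac2 (fun m => a * B m).
Proof.
move=> /(inMac2_scale_add a)/(_ inMac2_zero).
by under [X in inMac2 X]functional_extensionality do rewrite addr0.
Qed.

Lemma inMac2_psum L : vlist L -> inMac2 (psum C L).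
Proof.
move=> vL; exists [:: (1, L)]; split; first by rewrite /= vL.
by apply: functional_extensionality => m; rewrite big_seq1 mul1r.
Qed.

Lemma inMac2_eq0 (B : ps C) (m : mon) : inMac2 B -> m 0%N != (0, 0)%N -> B m = 0.
Proof. by case=> c [_ ->] m0; rewrite big1 // => x _; rewrite psum_eq0 // mulr0. Qed.

Lemma inMac2_sum n (a : 'I_n -> C) (B : 'I_n -> ps C) :
  (forall i, inMac2 (B i)) -> inMac2 (fun m => \sum_i a i * B i m).
Proof.
elim: n a B => [|n IHn] a B B_Mac2.
  by under [X in inMac2 X]functional_extensionality do rewrite big_ord0; exact: inMac2_zero.
under [X in inMac2 X]functional_extensionality do rewrite big_ord_recl.
by apply: inMac2_scale_add; [exact: B_Mac2 | exact: IHn].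
Qed.

End Mac2Closure.

Section ContractedAssignments.
Variables (I : finType) (mu : I -> nat * nat).
Hypothesis mu_neq0 : forall i, mu i != (0, 0)%N.

Definition const_on (S : seq (I * I)) (k : I -> nat) : bool := all (fun p => k p.1 == k p.2) S.
Definition proper_on (S : seq (I * I)) (k : I -> nat) : bool := all (fun p => k p.1 != k p.2) S.

Section Contraction.
Variable S : seq (I * I).

Let adj : rel I := fun u v => ((u, v) \in S) || ((v, u) \in S).
Let adj_sym : symmetric adj. Proof. by move=> u v; rewrite /adj orbC. Qed.
Let rep := fingraph.root adj.
Let reps : {set I} := [set v | rep v == v].

Let adj_csym : connect_sym adj := sym_connect_sym adj_sym.

Let rep_in v : rep v \in reps.
Proof. by rewrite inE /rep (root_root adj_csym). Qed.

Let toR (v : I) : {x | x \in reps} := exist _ (rep v) (rep_in v).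
Let muR (v : I) := vsum (fun w => rep w == v) mu.

Let toR_val (r : {x | x \in reps}) : toR (val r) = r.
Proof. by apply: val_inj => /=; have := valP r; rewrite inE => /eqP. Qed.

Let sum_toR (rho : {x | x \in reps} -> nat) j (F : I -> nat) :
  (\sum_(v | rho (toR v) == j) F v = \sum_(r | rho r == j) \sum_(v | rep v == val r) F v)%N.
Proof.
rewrite (partition_big toR (fun r => rho r == j)) //.
apply: eq_bigr => r rho_r; apply: eq_bigl => v.
apply/andP/idP => [[_ /eqP <-] // | rep_v].
by have -> : toR v = r by apply: val_inj; apply/eqP.
Qed.

Let valid_toR (m : mon) (rho : {x | x \in reps} -> nat) :
  valid_assign mu m (fun v => rho (toR v)) = valid_assign (restr reps muR) m rho.
Proof.
have mon_toR j : assign_mon mu (fun v => rho (toR v)) j = assign_mon (restr reps muR) rho j.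
  by rewrite /assign_mon /vsum !sum_toR.
apply/valid_assignP/valid_assignP => -[rho_pos m_rho].
  by split=> [r | j]; [rewrite -(toR_val r) | rewrite m_rho mon_toR].
by split=> [v | j]; [exact: rho_pos | rewrite m_rho mon_toR].
Qed.

Lemma const_on_connect k : const_on S k -> forall u v, connect adj u v -> k u = k v.
Proof.
move=> /allP k_const u v /connectP[p]; elim: p u => [|w p IHp] u /=; first by move=> _ ->.
case/andP => /orP[uw_S | wu_S] p_path v_last; rewrite -(IHp w p_path v_last).
  exact/eqP/(k_const _ uw_S).
exact/esym/eqP/(k_const _ wu_S).
Qed.

Lemma num_assign_const_on (m : mon) :
  num_assign mu (const_on S) m = num_assign (restr reps muR) xpredT m.
Proof.
rewrite /num_assign /card_assign.
pose lift (psi : {ffun {x | x \in reps} -> 'I_(mbound m)}) := [ffun v => psi (toR v)].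
have lift_inj : injective lift.
  move=> psi psi' /ffunP eq_psi; apply/ffunP => r.
  by have := eq_psi (val r); rewrite !ffunE toR_val.
rewrite -(card_imset _ lift_inj); apply: eq_card => phi; apply/idP/imsetP.
  rewrite inE => /andP[phi_const valid_phi].
  have phi_rep v : val (phi v) = val (phi (rep v)).
    by apply: (const_on_connect phi_const); exact: connect_root.
  have phi_lift : (fun v => val (phi v)) = (fun v => val (phi (val (toR v)))).
    by apply: functional_extensionality => v; rewrite -phi_rep.
  exists [ffun r => phi (val r)].
    by rewrite inE val_finfunE -(valid_toR m (fun r => val (phi (val r)))) -phi_lift.
  by apply/ffunP => v; apply/val_inj; rewrite !ffunE /= -phi_rep.
case=> psi; rewrite inE /= => valid_psi ->; rewrite inE /lift val_finfunE.
rewrite (valid_toR m (fun r => val (psi r))) valid_psi andbT.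
apply/allP => p p_S; apply/eqP; congr (val (psi _)); apply: val_inj; rewrite /toR /rep /=.
apply/(fingraph.rootP adj_csym)/connect1.
by rewrite /adj -surjective_pairing p_S.
Qed.

Lemma inMac2_const_on (C : nzRingType) : inMac2 (fun m => (num_assign mu (const_on S) m)%:R : C).
Proof.
have vL : vlist (map muR (enum reps)).
  rewrite /vlist all_map; apply/allP => v; rewrite mem_enum inE => /eqP rep_v /=.
  by apply: (vsum_neq0 _ (mu_neq0 v)); rewrite /= rep_v.
suff -> : (fun m => (num_assign mu (const_on S) m)%:R : C) = psum C (map muR (enum reps)).
  exact: inMac2_psum.
by apply: functional_extensionality => m; rewrite psum_map_enum num_assign_const_on.
Qed.

End Contraction.

(* Deletion-contraction on the first pair of [s]. *)
Lemma inMac2_const_proper (C : nzRingType) (s S : seq (I * I)) :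
  inMac2 (fun m => (num_assign mu (fun k => const_on S k && proper_on s k) m)%:R : C).
Proof.
elim: s S => [|p s IHs] S.
  suff -> : (fun k => const_on S k && proper_on [::] k) = const_on S by exact: inMac2_const_on.
  by apply: functional_extensionality => k; rewrite andbT.
suff -> : (fun m => (num_assign mu (fun k => const_on S k && proper_on (p :: s) k) m)%:R : C) =
          (fun m => -1 * (num_assign mu (fun k => const_on (p :: S) k && proper_on s k) m)%:R +
                    (num_assign mu (fun k => const_on S k && proper_on s k) m)%:R).
  exact: inMac2_scale_add.
apply: functional_extensionality => m.
rewrite (num_assignID _ (fun k => const_on S k && proper_on s k) (fun k => k p.1 == k p.2)).
rewrite natrD mulN1r.
rewrite (@eq_num_assign _ _ (fun k => const_on S k && proper_on s k && (k p.1 == k p.2))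
                            (fun k => const_on (p :: S) k && proper_on s k)); last first.
  by move=> k; rewrite /const_on /=; case: (k p.1 == k p.2); rewrite ?andbF ?andbT.
rewrite addKr; congr _%:R; apply: eq_num_assign => k.
by rewrite /proper_on /=; case: (k p.1 == k p.2); rewrite ?andbF ?andbT.
Qed.

End ContractedAssignments.

Lemma chromMac_Mac2 (C : nzRingType) (V : finType) (e : rel V) (wt : V -> nat) :
  inMac2 (chromMac C e wt).
Proof.
pose E := [seq p <- enum {: V * V} | e p.1 p.2].
suff -> : chromMac C e wt =
          (fun m => (num_assign (fun v => (1, wt v))%N
                                (fun k => const_on [::] k && proper_on E k) m)%:R).
  exact: inMac2_const_proper.
apply: functional_extensionality => m; rewrite chromMac_num; congr _%:R.
apply: eq_num_assign => k; rewrite /proper_assign /proper_on /=.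
apply/forallP/allP => [proper p | proper u].
  by rewrite mem_filter => /andP[e_p _]; exact: (implyP (forallP (proper p.1) p.2) e_p).
apply/forallP => v; apply/implyP => e_uv.
by apply: (proper (u, v)); rewrite mem_filter e_uv mem_enum.
Qed.

Section LinearOnMac2.
Variables (C : fieldType) (R : algType C).

Section OneMap.
Variable f : ps C -> R.
Hypothesis f_lin : Mac2_linear f.

Lemma Mac2_linear0 : f (fun _ => 0) = 0.
Proof.
have := f_lin 1 (inMac2_zero C) (inMac2_zero C).
under [X in f X = _ -> _]functional_extensionality do rewrite mulr0 addr0.
by rewrite scale1r => f0; apply: (addrI (f (fun _ => 0))); rewrite addr0 -f0.
Qed.

Lemma Mac2_linearZ a (B : ps C) : inMac2 B -> f (fun m => a * B m) = a *: f B.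
Proof.
move=> B_Mac2; have := f_lin a B_Mac2 (inMac2_zero C).
by under [X in f X = _ -> _]functional_extensionality do rewrite addr0; rewrite Mac2_linear0 addr0.
Qed.

Lemma Mac2_linear_sum n (a : 'I_n -> C) (B : 'I_n -> ps C) :
  (forall i, inMac2 (B i)) -> f (fun m => \sum_i a i * B i m) = \sum_i a i *: f (B i).
Proof.
elim: n a B => [|n IHn] a B B_Mac2.
  by under [X in f X]functional_extensionality do rewrite big_ord0; rewrite Mac2_linear0 big_ord0.
under [X in f X]functional_extensionality do rewrite big_ord_recl.
by rewrite f_lin ?IHn ?big_ord_recl //; exact: inMac2_sum.
Qed.

End OneMap.

Variables f g : ps C -> R.
Hypotheses (f_lin : Mac2_linear f) (g_lin : Mac2_linear g).

(* Either some nontrivial combination of the [w i] vanishes at all monomials avoiding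
   index 0, and eliminating one [w k] lowers [n], or each vector [(u i m)_i] would be
   such a combination, so every [u i] vanishes. *)
Lemma Mac2_tensor_eq0 n (u w : 'I_n -> ps C) :
  (forall i, inMac2 (u i)) -> (forall i, inMac2 (w i)) ->
  (forall m m' : mon, m 0%N = (0, 0)%N -> m' 0%N = (0, 0)%N -> \sum_i u i m * w i m' = 0) ->
  \sum_i f (u i) * g (w i) = 0.
Proof.
elim: n u w => [|n IHn] u w u_Mac2 w_Mac2 uw0; first by rewrite big_ord0.
have [[a [k [ak_neq0 aw0]]] | w_indep] := classic (exists (a : 'I_n.+1 -> C) k,
  a k != 0 /\ forall m' : mon, m' 0%N = (0, 0)%N -> \sum_i a i * w i m' = 0); last first.
  have u0 i : u i = (fun _ => 0).
    apply: functional_extensionality => m.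
    have [m0 | m0] := eqVneq (m 0%N) (0, 0)%N; last exact: inMac2_eq0.
    apply: NNPP => ui_neq0; apply: w_indep; exists (fun i => u i m), i.
    by split; [exact/eqP | move=> m' m'0; exact: uw0].
  by rewrite big1 // => i _; rewrite u0 Mac2_linear0 // mul0r.
pose b (j : 'I_n) := - (a (lift k j) / a k).
pose u' (j : 'I_n) m := b j * u k m + u (lift k j) m.
pose w' (j : 'I_n) := w (lift k j).
have w'_Mac2 j : inMac2 (w' j) by exact: w_Mac2.
have w_k : w k = (fun m' => \sum_j b j * w' j m').
  apply: functional_extensionality => m'.
  have [m'0 | m'0] := eqVneq (m' 0%N) (0, 0)%N; last first.
    rewrite (inMac2_eq0 (w_Mac2 k) m'0) big1 // => j _.
    by rewrite /w' (inMac2_eq0 (w_Mac2 _) m'0) mulr0.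
  have := aw0 m' m'0; rewrite (bigD1_ord k) //= => /eqP; rewrite addr_eq0 => /eqP akw.
  apply: (mulfI ak_neq0); rewrite akw mulr_sumr -sumrN; apply: eq_bigr => j _.
  by rewrite /b /w'; field.
transitivity (\sum_j f (u' j) * g (w' j)).
  rewrite (bigD1_ord k) //= w_k (Mac2_linear_sum g_lin _ w'_Mac2) mulr_sumr -big_split /=.
  by apply: eq_bigr => j _; rewrite f_lin // mulrDl -scalerAr scalerAl.
apply: IHn => // [j | m m' m0 m'0]; first exact: inMac2_scale_add.
rewrite -[RHS](uw0 m m' m0 m'0) (bigD1_ord k) //= w_k mulr_sumr -big_split /=.
by apply: eq_bigr => j _; rewrite /u' /w'; ring.
Qed.

End LinearOnMac2.

Fixpoint Mac2_pairs (C : nzRingType) (s : seq (ps C * ps C)) : Prop :=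
  if s is p :: s' then [/\ inMac2 p.1, inMac2 p.2 & Mac2_pairs s'] else True.

Section Mac2Pairs.
Variable C : nzRingType.

Lemma Mac2_pairs_nth (s : seq (ps C * ps C)) p0 i :
  Mac2_pairs s -> (i < size s)%N -> inMac2 (nth p0 s i).1 /\ inMac2 (nth p0 s i).2.
Proof.
elim: s i => [|p s IHs] [|i] //= [p1 p2 s_Mac2] lt_i; first by [].
exact: IHs.
Qed.

Lemma Mac2_pairs_cat (s1 s2 : seq (ps C * ps C)) :
  Mac2_pairs s1 -> Mac2_pairs s2 -> Mac2_pairs (s1 ++ s2).
Proof. by elim: s1 => [|p s1 IHs1] //= [p1 p2 /IHs1 IH] /IH. Qed.

Lemma Mac2_pairs_map (T : Type) (r : seq T) (F : T -> ps C * ps C) :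
  (forall x, inMac2 (F x).1 /\ inMac2 (F x).2) -> Mac2_pairs (map F r).
Proof. by move=> F_Mac2; elim: r => [|x r IHr] //=; have [] := F_Mac2 x. Qed.

Lemma Mac2_pairs_flatten (T : eqType) (r : seq T) (F : T -> seq (ps C * ps C)) :
  {in r, forall x, Mac2_pairs (F x)} -> Mac2_pairs (flatten (map F r)).
Proof.
elim: r => [|x r IHr] //= F_Mac2; apply: Mac2_pairs_cat; first by apply: F_Mac2; rewrite inE eqxx.
by apply: IHr => y y_r; apply: F_Mac2; rewrite inE y_r orbT.
Qed.

End Mac2Pairs.

Section Bilinear.
Variables (C : fieldType) (R : algType C) (f g : ps C -> R).
Hypotheses (f_lin : Mac2_linear f) (g_lin : Mac2_linear g).

Lemma Mac2_tensor_seq_eq0 (r : seq (ps C * ps C)) :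
  Mac2_pairs r ->
  (forall m m' : mon, m 0%N = (0, 0)%N -> m' 0%N = (0, 0)%N -> \sum_(p <- r) p.1 m * p.2 m' = 0) ->
  \sum_(p <- r) f p.1 * g p.2 = 0.
Proof.
move=> r_Mac2 r_coef; pose p0 : ps C * ps C := (fun _ => 0, fun _ => 0).
rewrite (big_nth p0) big_mkord.
apply: (Mac2_tensor_eq0 f_lin g_lin (u := fun i : 'I_(size r) => (nth p0 r i).1)
                                   (w := fun i : 'I_(size r) => (nth p0 r i).2)).
- by move=> i; have [] := Mac2_pairs_nth p0 r_Mac2 (ltn_ord i).
- by move=> i; have [] := Mac2_pairs_nth p0 r_Mac2 (ltn_ord i).
- by move=> m m' m0 m'0; have := r_coef m m' m0 m'0; rewrite (big_nth p0) big_mkord.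
Qed.

Let neg_pair (p : ps C * ps C) : ps C * ps C := (fun m => -1 * p.1 m, p.2).

Let Mac2_neg_pairs (t : seq (ps C * ps C)) :
  Mac2_pairs t ->
  Mac2_pairs (map neg_pair t) /\
  \sum_(p <- map neg_pair t) f p.1 * g p.2 = - \sum_(p <- t) f p.1 * g p.2.
Proof.
elim: t => [|p t IHt] /=; first by rewrite !big_nil oppr0.
case=> p1 p2 /IHt[neg_t_Mac2 neg_t_sum]; rewrite !big_cons neg_t_sum opprD.
by rewrite Mac2_linearZ // scaleN1r mulNr; do !split=> //; exact: inMac2_scale.
Qed.

Lemma Mac2_bilinear_eq (s t : seq (ps C * ps C)) :
  Mac2_pairs s -> Mac2_pairs t ->
  (forall m m' : mon, m 0%N = (0, 0)%N -> m' 0%N = (0, 0)%N ->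
     \sum_(p <- s) p.1 m * p.2 m' = \sum_(p <- t) p.1 m * p.2 m') ->
  \sum_(p <- s) f p.1 * g p.2 = \sum_(p <- t) f p.1 * g p.2.
Proof.
move=> s_Mac2 /Mac2_neg_pairs[neg_t_Mac2 neg_t_sum] st_coef; apply/eqP; rewrite -subr_eq0.
rewrite -neg_t_sum -big_cat /=; apply/eqP/Mac2_tensor_seq_eq0.
  exact: Mac2_pairs_cat.
move=> m m' m0 m'0; rewrite big_cat big_map /= st_coef // -big_split /=.
by rewrite big1 // => p _; rewrite mulN1r mulNr addrN.
Qed.

End Bilinear.

Section CoproductPairs.
Variable C : nzRingType.

Definition psum_coprod_pairs (c : seq (C * seq (nat * nat))) : seq (ps C * ps C) :=
  flatten [seq [seq ((fun m => x.1 * psum C (lrestr J) m), psum C (lrestr (~: J)))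
               | J <- index_enum {set 'I_(size x.2)}] | x <- c].

Definition chromMac_coprod_pairs (V : finType) (e : rel V) (wt : V -> nat) : seq (ps C * ps C) :=
  [seq (chromMac_ind C e wt A, chromMac_ind C e wt (~: A)) | A <- index_enum {set V}].

Lemma vlist_lrestr L (J : {set 'I_(size L)}) : vlist L -> vlist (lrestr J).
Proof.
by move=> vL; rewrite /vlist /lrestr all_map; apply/allP => i _ /=; exact: vlist_nth_neq0.
Qed.

Lemma Mac2_psum_coprod_pairs c : all (fun x => vlist x.2) c -> Mac2_pairs (psum_coprod_pairs c).
Proof.
move=> /allP vc; apply: Mac2_pairs_flatten => x /vc vx; apply: Mac2_pairs_map => J /=.
by split; [apply: inMac2_scale | idtac]; apply/inMac2_psum/vlist_lrestr.
Qed.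

Lemma Mac2_chromMac_coprod_pairs (V : finType) (e : rel V) (wt : V -> nat) :
  Mac2_pairs (chromMac_coprod_pairs e wt).
Proof. by apply: Mac2_pairs_map => A; split; exact: chromMac_Mac2. Qed.

Lemma psum_coprod_pairs_coef c (m m' : mon) :
  all (fun x => vlist x.2) c -> m' 0%N = (0, 0)%N ->
  \sum_(p <- psum_coprod_pairs c) p.1 m * p.2 m' = \sum_(x <- c) x.1 * psum C x.2 (mcat m m').
Proof.
move=> /allP vc m'0; rewrite big_flatten big_map !big_seq; apply: eq_bigr => x /vc vx.
by rewrite big_map psum_mcat // mulr_sumr; apply: eq_bigr => J _; rewrite mulrA.
Qed.

Lemma chromMac_coprod_pairs_coef (V : finType) (e : rel V) (wt : V -> nat) (m m' : mon) :
  m' 0%N = (0, 0)%N ->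
  \sum_(p <- chromMac_coprod_pairs e wt) p.1 m * p.2 m' = chromMac C e wt (mcat m m').
Proof. by move=> m'0; rewrite chromMac_mcat // big_map. Qed.

Lemma chromMac_coprod_pairs_sum (R : nzRingType) (f g : ps C -> R)
    (V : finType) (e : rel V) (wt : V -> nat) :
  \sum_(p <- chromMac_coprod_pairs e wt) f p.1 * g p.2 =
  \sum_(A : {set V}) f (chromMac_ind C e wt A) * g (chromMac_ind C e wt (~: A)).
Proof. by rewrite big_map. Qed.

End CoproductPairs.

Lemma conv_exp_pairs (C : fieldType) (R : algType C) (f g : ps C -> R) c :
  Mac2_linear f -> all (fun x => vlist x.2) c ->
  conv_exp f g c = \sum_(p <- psum_coprod_pairs c) f p.1 * g p.2.
Proof.
move=> f_lin /allP vc; rewrite /conv_exp big_flatten big_map !big_seq; apply: eq_bigr => x /vc vx.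
rewrite big_map scaler_sumr; apply: eq_bigr => J _ /=.
by rewrite Mac2_linearZ ?scalerAl //; exact/inMac2_psum/vlist_lrestr.
Qed.

Theorem corollary3p14 (K : realType) (R : comAlgType K[i])
    (f g : ps K[i] -> R) (hf : Mac2_linear f) (hg : Mac2_linear g)
    (V : finType) (e : rel V) (e_sym : symmetric e) (e_irr : irreflexive e)
    (wt : V -> nat) (wt_pos : forall v, (0 < wt v)%N) :
  (* X_G lies in Mac^2, so (f*g)(X_G) is defined ... *)
  inMac2 (chromMac K[i] e wt) /\
  (* ... and, computed from (any, equivalently the unique) p-expansion of X_G: *)
  (forall c, pexpansion c (chromMac K[i] e wt) ->
     conv_exp f g c =
     \sum_(A : {set V}) f (chromMac_ind K[i] e wt A) * g (chromMac_ind K[i] e wt (~: A))).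
Proof.
split=> [|c [vc X_G]]; first exact: chromMac_Mac2.
rewrite conv_exp_pairs // -chromMac_coprod_pairs_sum.
apply: Mac2_bilinear_eq => //.
- exact: Mac2_psum_coprod_pairs.
- exact: Mac2_chromMac_coprod_pairs.
move=> m m' _ m'0.
by rewrite psum_coprod_pairs_coef // chromMac_coprod_pairs_coef // X_G.
Qed.
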